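(* Let $\Sigma$ be a Hamiltonian surface in the Brady complex $X$. Then for every vertex $x$ of $X$, the Hamiltonian cycle $\Sigma\cap L_x$ of the link $L_x$ is of type 3.
   Context: The Brady complex $X$ is the simply connected CAT(0) piecewise Euclidean 2-complex (constructed by T. Brady) on which $\mathrm{Aut}(F_2)$ acts properly and cocompactly by cellular isometries, transitively on vertices. Its closed 2-cells (faces) are unit equilateral triangles and unit lozenges (rhombi with angles $\pi/3$ and $2\pi/3$); every edge lies in exactly one triangle and two lozenges. The link $L_x$ of a vertex $x$ is the graph whose vertices are the edges of $X$ at $x$ and whose edges are the corners at $x$ of faces containing $x$; a link edge is labeled $t$ (triangle corner), $\ell$ (lozenge corner of angle $\pi/3$) or $\mathcal{L}$ (lozenge corner of angle $2\pi/3$). Each labeled $L_x$ is isomorphic to the Moebius ladder with vertices $u_0,\dots,u_3,w_0,\dots,w_3$, rungs $u_iw_i$ labeled $\mathcal{L}$, horizontal edges $u_0u_1,u_2u_3,w_0w_1,w_2w_3$ labeled $\ell$ and $u_1u_2,u_3w_0,w_1w_2,w_3u_0$ labeled $t$. Its Hamiltonian cycles are: type 1, the unique one with no rung; and those containing exactly two rungs joined by two horizontal paths of three edges each, which are of type 2 if these paths are labeled $\ell,t,\ell$ and of type 3 if they are labeled $t,\ell,t$. A Hamiltonian surface in $X$ is a connected union $\Sigma$ of closed faces which is a surface without boundary, contains every vertex and every edge of $X$, and has no multiple vertex; for each vertex $x$, $\Sigma\cap L_x$ (the corners of faces of $\Sigma$ at $x$) is a Hamiltonian cycle of $L_x$.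 *)

From Stdlib Require Import Relations.
From mathcomp Require Import all_boot.

Set Implicit Arguments.
Unset Strict Implicit.
Unset Printing Implicit Defensive.

(* A letter is (g, e): g = false for a, true for b; e = true for an inverse. *)
(* Elements of F_2 are reduced words.                                        *)
Definition letter := (bool * bool)%type.
Definition word := seq letter.

Definition linv (l : letter) : letter := (l.1, ~~ l.2).

Definition reducedb (w : word) : bool :=
  if w is l :: t then path (fun a b => b != linv a) l t else true.

Definition freduce (w : word) : word :=
  foldr (fun l acc => if acc is h :: t then (if h == linv l then t else l :: acc)
                      else [:: l]) [::] w.

Definition winv (w : word) : word := rev (map linv w).

(* An endomorphism of F_2 is given by the pair (image of a, image of b). *)
Definition endo := (word * word)%type.

Definition img (p : endo) (l : letter) : word :=
  let u := if l.1 then p.2 else p.1 in if l.2 then winv u else u.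

Definition subst (p : endo) (w : word) : word := freduce (flatten (map (img p) w)).

(* composition p o q (first q, then p) *)
Definition acomp (p q : endo) : endo := (subst p q.1, subst p q.2).

Definition idaut : endo := ([:: (false, false)], [:: (true, false)]).

Definition is_aut (p : endo) : Prop :=
  reducedb p.1 && reducedb p.2 /\
  exists q : endo, reducedb q.1 && reducedb q.2 /\ acomp p q = idaut /\ acomp q p = idaut.

(* V = vertices, F = faces, adj = edge relation (edges are unordered pairs   *)
(* of vertices), fv f = cyclic list of the vertices of f: 3 vertices for a   *)
(* unit equilateral triangle, 4 for a unit lozenge, listed starting at an    *)
(* acute (pi/3) corner, so the acute corners are those at even positions.    *)
Section Complex.
Variables (V F : eqType) (adj : V -> V -> Prop) (fv : F -> seq V).

Definition cnext (s : seq V) (x : V) : V := nth x s ((index x s).+1 %% size s).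
Definition cprev (s : seq V) (x : V) : V :=
  nth x s ((index x s + (size s).-1) %% size s).

Definition is_tri (f : F) : bool := size (fv f) == 3.
Definition is_loz (f : F) : bool := size (fv f) == 4.

Definition edge_in (f : F) (x y : V) : Prop :=
  x \in fv f /\ (cnext (fv f) x = y \/ cprev (fv f) x = y).

(* labels of link edges: t (triangle corner), l (acute lozenge corner),
   L (obtuse lozenge corner) *)
Inductive lab := Lt | Ll | LL.

Definition corner_lab (f : F) (x : V) : lab :=
  if size (fv f) == 3 then Lt else if odd (index x (fv f)) then LL else Ll.

(* The link L_x: its vertices are the edges xy (i.e. the neighbours y of x),
   its edges are the corners at x of the faces containing x.  [linkedge x f a b]
   says: f contains x, and the corner of f at x is a link edge joining a and b. *)
Definition linkedge (x : V) (f : F) (a b : V) : Prop :=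
  x \in fv f /\
  ((cprev (fv f) x = a /\ cnext (fv f) x = b) \/
   (cprev (fv f) x = b /\ cnext (fv f) x = a)).

(* The labelled Moebius ladder: u_i = i, w_i = 4 + i (i < 4). *)
Definition ladder_edges : seq (nat * nat * lab) :=
  [:: (0, 4, LL); (1, 5, LL); (2, 6, LL); (3, 7, LL);   (* rungs u_i w_i *)
      (0, 1, Ll); (2, 3, Ll); (4, 5, Ll); (6, 7, Ll);
      (1, 2, Lt); (3, 4, Lt); (5, 6, Lt); (7, 0, Lt)].

Definition link_is_ladder (x : V) : Prop :=
  exists (phi : nat -> V) (psi : nat -> F),
    (forall i j, i < 8 -> j < 8 -> phi i = phi j -> i = j) /\
    (forall y, adj x y <-> exists2 i, i < 8 & phi i = y) /\
    (forall k l, k < 12 -> l < 12 -> psi k = psi l -> k = l) /\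
    (forall f, x \in fv f <-> exists2 k, k < 12 & psi k = f) /\
    (forall k, k < 12 ->
       let: (a, b, lb) := nth (0, 0, Lt) ladder_edges k in
       linkedge x (psi k) (phi a) (phi b) /\ corner_lab (psi k) x = lb).

Fixpoint epath (R : V -> V -> Prop) (x : V) (p : seq V) : Prop :=
  if p is y :: p' then R x y /\ epath R y p' else True.

(* elementary homotopies of edge paths in the 2-complex: removing/inserting
   a backtrack, removing/inserting the boundary loop of a face *)
Inductive hstep : seq V -> seq V -> Prop :=
| hs_back l1 l2 a b : adj a b -> hstep (l1 ++ a :: b :: a :: l2) (l1 ++ a :: l2)
| hs_face l1 l2 a r f k : rot k (fv f) = a :: r ->
    hstep (l1 ++ a :: l2) (l1 ++ a :: r ++ a :: l2).

Definition simply_connected : Prop :=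
  (forall x y, exists p, epath adj x p /\ last x p = y) /\
  (forall a p, epath adj a p -> last a p = a ->
     clos_refl_sym_trans (seq V) hstep (a :: p) [:: a]).

(* t is the cyclic vertex list s after a cellular isometry of the face
   (rotation / reflection; for lozenges acute corners go to acute corners) *)
Definition feq (s t : seq V) : Prop :=
  exists k, k < size s /\
    ((t = rot k s /\ ((size s == 4) ==> ~~ odd k)) \/
     (t = rot k (rev s) /\ ((size s == 4) ==> odd k))).

Record brady_complex (act : endo -> V -> V) : Prop := {
  bc_adj_sym : forall x y, adj x y -> adj y x;
  bc_adj_irr : forall x, ~ adj x x;
  bc_face_shape : forall f, (is_tri f || is_loz f) && uniq (fv f);
  bc_face_edges : forall f y, y \in fv f -> adj y (cnext (fv f) y);
  bc_one_tri : forall x y, adj x y ->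
    exists t, [/\ is_tri t, edge_in t x y &
      forall t', is_tri t' -> edge_in t' x y -> t' = t];
  bc_two_loz : forall x y, adj x y ->
    exists l1 l2, [/\ l1 <> l2, is_loz l1 && is_loz l2, edge_in l1 x y, edge_in l2 x y &
      forall l, is_loz l -> edge_in l x y -> l = l1 \/ l = l2];
  bc_links : forall x, link_is_ladder x;
  (* simply connected (with the links above this gives CAT(0)) *)
  bc_simply_connected : simply_connected;
  bc_act_id : forall x, act idaut x = x;
  bc_act_comp : forall g h, is_aut g -> is_aut h ->
    forall x, act (acomp g h) x = act g (act h x);
  bc_act_adj : forall g, is_aut g -> forall x y, adj x y -> adj (act g x) (act g y);
  bc_act_face : forall g, is_aut g -> forall f, exists f', feq (map (act g) (fv f)) (fv f');
  (* ... properly (finite vertex stabilisers; X is locally finite) ... *)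
  bc_act_proper : forall x, exists s : seq endo,
    forall g, is_aut g -> act g x = x -> g \in s;
  (* ... cocompactly (finitely many orbits of faces) ... *)
  bc_act_cocompact : exists fs : seq F, forall f, exists2 f0, f0 \in fs &
    exists2 g, is_aut g & feq (map (act g) (fv f0)) (fv f);
  bc_act_trans : forall x y, exists2 g, is_aut g & act g x = y
}.

(* Hamiltonian surfaces: S is the set of faces of Sigma.                     *)

Definition link_single_cycle (S : F -> Prop) (x : V) : Prop :=
  exists n, 3 <= n /\ exists (ys : nat -> V) (fs : nat -> F),
    [/\ forall i j, i < n -> j < n -> ys i = ys j -> i = j,
        forall i j, i < n -> j < n -> fs i = fs j -> i = j,
        forall i, i < n -> S (fs i) /\ linkedge x (fs i) (ys i) (ys ((i.+1) %% n)) &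
        forall f, S f -> x \in fv f -> exists2 i, i < n & fs i = f].

Definition hamiltonian_surface (S : F -> Prop) : Prop :=
  [/\
      (forall x y, exists p,
         epath (fun u v => exists2 f, S f & edge_in f u v) x p /\ last x p = y),
      (forall x, exists2 f, S f & x \in fv f),
      (forall x y, adj x y -> exists2 f, S f & edge_in f x y) &
      (* surface without boundary and without multiple vertex: the link of
         Sigma at every vertex is a single circle *)
      (forall x, link_single_cycle S x)].

Definition type3 (S : F -> Prop) (x : V) : Prop :=
  exists (r1 r2 a1 b1 c1 a2 b2 c2 : F) (v0 v1 v2 v3 v0' w1 w2 v3' : V),
    [/\ uniq [:: r1; r2; a1; b1; c1; a2; b2; c2],
        uniq [:: v0; v1; v2; v3; v3'; w2; w1; v0'],
        (linkedge x r1 v0 v0' /\ linkedge x r2 v3 v3' /\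
         linkedge x a1 v0 v1 /\ linkedge x b1 v1 v2 /\ linkedge x c1 v2 v3 /\
         linkedge x a2 v0' w1 /\ linkedge x b2 w1 w2 /\ linkedge x c2 w2 v3'),
        (corner_lab r1 x = LL /\ corner_lab r2 x = LL /\
         corner_lab a1 x = Lt /\ corner_lab b1 x = Ll /\ corner_lab c1 x = Lt /\
         corner_lab a2 x = Lt /\ corner_lab b2 x = Ll /\ corner_lab c2 x = Lt) &
        forall f, (S f /\ x \in fv f) <-> f \in [:: r1; r2; a1; b1; c1; a2; b2; c2]].

End Complex.

From HB Require Import structures.
From mathcomp Require Import all_boot.

Set Implicit Arguments.
Unset Strict Implicit.
Unset Printing Implicit Defensive.

(* At a vertex x the corners of faces of the surface form a Hamiltonian cycle
   of the link, a labelled Moebius ladder; read cyclically, their labels form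
   a word of length 8.  An exhaustive search over the Hamiltonian cycles of
   the ladder shows that this word contains a triangle corner t, that the two
   corners next to a t are never both obtuse lozenge corners L, and that if
   one of them is L then the cycle is of type 3.
   Now take a triangle T of the surface with vertices x, q, r, and the
   lozenges of the surface glued to its three sides.  At the two ends of a
   side of a lozenge one corner is acute and the other obtuse.  So if neither
   lozenge corner next to T at x were obtuse, the lozenge on xq would be
   obtuse at q, the one on qr acute at q and obtuse at r, the one on rx acute
   at r and obtuse at x: a contradiction.  Hence some t-corner at x has an L
   neighbour, and the cycle at x is of type 3. *)

Lemma modnSml m n : (m %% n).+1 %% n = m.+1 %% n.
Proof. by rewrite -addn1 modnDml addn1. Qed.

Lemma modnDl_inj s i j n : i < n -> j < n -> (s + i) %% n = (s + j) %% n -> i = j.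
Proof. by move=> ilt jlt /eqP; rewrite eqn_modDl !modn_small // => /eqP. Qed.

Lemma modnS_neq p n : 1 < n -> p < n -> p.+1 %% n != p.
Proof.
move=> n1 pn; apply/eqP => e.
have : 1 + p == 0 + p %[mod n] by rewrite add1n e add0n modn_small.
by rewrite eqn_modDr mod0n modn_small.
Qed.

Lemma modnS_pred p n : 0 < n -> p < n -> ((p + n.-1) %% n).+1 %% n = p.
Proof. by move=> n0 pn; rewrite modnSml -addnS prednK // modnDr modn_small. Qed.

Section CyclicNeighbours.
Variable T : eqType.
Implicit Types (s : seq T) (x : T).

Lemma size_gt0_mem s x : x \in s -> 0 < size s.
Proof. by case: s. Qed.

Lemma cnext_in s x : x \in s -> cnext s x \in s.
Proof. by move=> xs; rewrite /cnext mem_nth // ltn_pmod // (size_gt0_mem xs). Qed.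

Lemma cprev_in s x : x \in s -> cprev s x \in s.
Proof. by move=> xs; rewrite /cprev mem_nth // ltn_pmod // (size_gt0_mem xs). Qed.

Lemma index_cnext s x : uniq s -> x \in s ->
  index (cnext s x) s = (index x s).+1 %% size s.
Proof. by move=> us xs; rewrite /cnext index_uniq // ltn_pmod // (size_gt0_mem xs). Qed.

Lemma index_cprev s x : uniq s -> x \in s ->
  index (cprev s x) s = (index x s + (size s).-1) %% size s.
Proof. by move=> us xs; rewrite /cprev index_uniq // ltn_pmod // (size_gt0_mem xs). Qed.

Lemma cprev_cnext s x : uniq s -> x \in s -> cprev s (cnext s x) = x.
Proof.
move=> us xs; apply: (@index_inj _ x s); rewrite ?cprev_in ?cnext_in //.
rewrite index_cprev ?cnext_in // index_cnext // modnDml addSn -addnS.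
by rewrite prednK ?(size_gt0_mem xs) // modnDr modn_small ?index_mem.
Qed.

Lemma cnext_cprev s x : uniq s -> x \in s -> cnext s (cprev s x) = x.
Proof.
move=> us xs; apply: (@index_inj _ x s); rewrite ?cnext_in ?cprev_in //.
rewrite index_cnext ?cprev_in // index_cprev // modnSml -addnS.
by rewrite prednK ?(size_gt0_mem xs) // modnDr modn_small ?index_mem.
Qed.

Lemma odd_index_cnext s x : uniq s -> x \in s -> size s = 4 ->
  odd (index (cnext s x) s) = ~~ odd (index x s).
Proof.
move=> us xs s4; rewrite index_cnext // s4.
by have := index_mem x s; rewrite xs s4; case: (index x s) => [|[|[|[|]]]].
Qed.

Lemma odd_index_cprev s x : uniq s -> x \in s -> size s = 4 ->
  odd (index (cprev s x) s) = ~~ odd (index x s).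
Proof.
move=> us xs s4; rewrite index_cprev // s4.
by have := index_mem x s; rewrite xs s4; case: (index x s) => [|[|[|[|]]]].
Qed.

Lemma cnext_cnext3 s x : uniq s -> x \in s -> size s = 3 ->
  cnext s (cnext s x) = cprev s x.
Proof.
move=> us xs s3; apply: (@index_inj _ x s); rewrite ?cnext_in ?cprev_in //.
rewrite !index_cnext ?cnext_in // index_cprev // s3.
by have := index_mem x s; rewrite xs s3; case: (index x s) => [|[|[|]]].
Qed.

Lemma cprev_cprev3 s x : uniq s -> x \in s -> size s = 3 ->
  cprev s (cprev s x) = cnext s x.
Proof.
move=> us xs s3; apply: (@index_inj _ x s); rewrite ?cnext_in ?cprev_in //.
rewrite !index_cprev ?cprev_in // index_cnext // s3.
by have := index_mem x s; rewrite xs s3; case: (index x s) => [|[|[|]]].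
Qed.

End CyclicNeighbours.

Section Faces.
Variables (V F : eqType) (fv : F -> seq V).
Hypothesis fv_uniq : forall f, uniq (fv f).

Lemma edge_in_sym f a b : edge_in fv f a b -> edge_in fv f b a.
Proof.
case=> af [<-|<-]; split; rewrite ?cnext_in ?cprev_in //.
- by right; rewrite cprev_cnext.
- by left; rewrite cnext_cprev.
Qed.

Lemma linkedge_sym x f a b : linkedge fv x f a b -> linkedge fv x f b a.
Proof. by case=> xf [[? ?]|[? ?]]; split=> //; [right|left]. Qed.

Lemma linkedge_edge_in x f a b y : linkedge fv x f a b ->
  edge_in fv f x y <-> y = a \/ y = b.
Proof.
case=> xf [[ea eb]|[ea eb]]; rewrite /edge_in ea eb; split.
- by case=> _ [<-|<-]; [right|left].
- by case=> ->; split=> //; [right|left].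
- by case=> _ [<-|<-]; [left|right].
- by case=> ->; split=> //; [left|right].
Qed.

Lemma linkedge_pair x f a b c d : linkedge fv x f a b -> linkedge fv x f c d ->
  (a = c /\ b = d) \/ (a = d /\ b = c).
Proof. by case=> _ [[<- <-]|[<- <-]] [_ [[-> ->]|[-> ->]]]; [left|right|right|left]. Qed.

Lemma linkedge_corner x f : x \in fv f ->
  linkedge fv x f (cprev (fv f) x) (cnext (fv f) x).
Proof. by split=> //; left. Qed.

Lemma corner_lab_Lt f x : corner_lab fv f x = Lt <-> is_tri fv f.
Proof. by rewrite /corner_lab /is_tri; case: (size _ == 3) => //; case: (odd _). Qed.

Lemma lozenge_corner_LL f p q : is_loz fv f -> edge_in fv f p q ->
  corner_lab fv f q = LL <-> corner_lab fv f p <> LL.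
Proof.
move=> /eqP f4 [pf [<-|<-]]; rewrite /corner_lab f4 /=;
  [rewrite odd_index_cnext | rewrite odd_index_cprev]; by [|case: (odd _)].
Qed.

End Faces.

Definition lab_code (l : lab) : nat := match l with Lt => 0 | Ll => 1 | LL => 2 end.
Definition lab_of_code (n : nat) : lab := match n with 0 => Lt | 1 => Ll | _ => LL end.
Lemma lab_codeK : cancel lab_code lab_of_code. Proof. by case. Qed.
HB.instance Definition _ := Equality.copy lab (can_type lab_codeK).

Definition ladder_label (a b : nat) : option lab :=
  ohead [seq e.2 | e <- ladder_edges & (e.1 == (a, b)) || (e.1 == (b, a))].

Definition ladder_adj (a b : nat) : bool := ladder_label a b != None.

Lemma ladder_edge_label a b lb : (a, b, lb) \in ladder_edges ->
  [/\ a < 8, b < 8, ladder_label a b = Some lb & ladder_label b a = Some lb].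
Proof.
have edges_ok : all (fun e => let: (a, b, lb) := e in
    [&& a < 8, b < 8, ladder_label a b == Some lb & ladder_label b a == Some lb]) ladder_edges.
  by [].
by move=> /(allP edges_ok) /and4P[? ? /eqP ? /eqP ?].
Qed.

Fixpoint ladder_paths (n : nat) : seq (seq nat) :=
  if n is n'.+1 then
    [seq a :: p | p <- ladder_paths n',
                  a <- [seq a <- iota 0 8 | (p == [::]) || ladder_adj a (head 0 p)]]
  else [:: [::]].

Lemma ladder_paths_complete l : all (gtn 8) l -> sorted ladder_adj l ->
  l \in ladder_paths (size l).
Proof.
elim: l => [|a p IHp] // /andP[a8 p8] sl; apply/allpairsPdep; exists p, a; split=> //.
- exact/IHp/(path_sorted sl).
- rewrite mem_filter mem_iota leq0n add0n (a8 : a < 8) andbT.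
  by case: p sl {IHp p8} => //= b p /andP[->].
Qed.

Definition cycle_labels (l : seq nat) : seq (option lab) :=
  mkseq (fun i => ladder_label (nth 0 l i) (nth 0 l (i.+1 %% size l))) (size l).

Definition cnth (w : seq lab) (i : nat) : lab := nth Lt w (i %% size w).

Definition type3_pattern : seq lab := [:: Lt; Ll; Lt; LL; Lt; Ll; Lt; LL].

Definition type3_word (w : seq lab) : bool :=
  has (fun s => mkseq (fun k => cnth w (s + k)) (size w) == type3_pattern) (iota 0 (size w)).

Definition triangle_corner_ok (w : seq lab) (j : nat) : bool :=
  (cnth w j.+1 == Lt) ==>
  ~~ ((cnth w j == LL) && (cnth w j.+2 == LL)) &&
  ((cnth w j == LL) || (cnth w j.+2 == LL) ==> type3_word w).

Definition ladder_word_ok (w : seq lab) : bool :=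
  (Lt \in w) && all (triangle_corner_ok w) (iota 0 (size w)).

Lemma ladder_hamiltonian_cycles_ok :
  all (fun l => all isSome (cycle_labels l) ==> ladder_word_ok (pmap id (cycle_labels l)))
      [seq l <- ladder_paths 8 | uniq l].
Proof. by vm_compute. Qed.

Lemma hamiltonian_ladder_word_ok l w :
  perm_eq l (iota 0 8) -> cycle_labels l = map Some w -> ladder_word_ok w.
Proof.
move=> pl lw; have l8 : size l = 8 by rewrite (perm_size pl) size_iota.
have w8 : size w = 8 by rewrite -(size_map Some) -lw size_mkseq.
have sl : sorted ladder_adj l.
  apply/(sortedP 0) => i; rewrite l8 => i7; have i8 := ltnW i7.
  have := congr1 (nth None ^~ i) lw.
  by rewrite /ladder_adj nth_mkseq ?l8 ?modn_small // (nth_map Lt) ?w8 // => ->.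
have l_lt8 : all (gtn 8) l by apply/allP => a; rewrite (perm_mem pl) mem_iota.
have SomeK : pcancel (@Some lab) id by [].
have := allP ladder_hamiltonian_cycles_ok l.
rewrite mem_filter (perm_uniq pl) iota_uniq lw (map_pK SomeK) all_map.
have := ladder_paths_complete l_lt8 sl; rewrite l8 => -> /(_ isT) /implyP.
by apply; apply/allP.
Qed.

Lemma ladder_word_ok_corner w j : ladder_word_ok w -> j < size w -> cnth w j.+1 = Lt ->
  ~ (cnth w j = LL /\ cnth w j.+2 = LL) /\
  (cnth w j = LL \/ cnth w j.+2 = LL -> type3_word w).
Proof.
case/andP=> _ /allP/(_ j); rewrite mem_iota /triangle_corner_ok => ok jw wt.
move: ok; rewrite jw wt => /(_ isT) /andP[].
by case: (cnth w j) (cnth w j.+2) => [] [] //=; case: (type3_word w) => //; intuition.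
Qed.

Section LinkCycle.
Variables (V F : eqType) (fv : F -> seq V) (S : F -> Prop) (x : V).

Definition link_cycle (n : nat) (ys : nat -> V) (fs : nat -> F) : Prop :=
  [/\ forall i j, i < n -> j < n -> ys i = ys j -> i = j,
      forall i j, i < n -> j < n -> fs i = fs j -> i = j,
      forall i, i < n -> S (fs i) /\ linkedge fv x (fs i) (ys i) (ys (i.+1 %% n)) &
      forall f, S f -> x \in fv f -> exists2 i, i < n & fs i = f].

Definition link_word (n : nat) (fs : nat -> F) : seq lab :=
  mkseq (fun i => corner_lab fv (fs i) x) n.

Lemma cnth_link_word n fs i : 0 < n ->
  cnth (link_word n fs) i = corner_lab fv (fs (i %% n)) x.
Proof. by move=> n0; rewrite /cnth size_mkseq nth_mkseq ?ltn_pmod. Qed.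

Lemma link_cycle_rot n s ys fs : 0 < n -> link_cycle n ys fs ->
  link_cycle n (fun i => ys ((s + i) %% n)) (fun i => fs ((s + i) %% n)).
Proof.
move=> n0 [ys_inj fs_inj edges cover]; have mod_lt k := ltn_pmod k n0; split.
- by move=> i j ilt jlt /(ys_inj _ _ (mod_lt _) (mod_lt _)) /modnDl_inj; apply.
- by move=> i j ilt jlt /(fs_inj _ _ (mod_lt _) (mod_lt _)) /modnDl_inj; apply.
- by move=> i ilt; have := edges _ (mod_lt (s + i)); rewrite modnSml modnDmr addnS.
- move=> f Sf xf; have [j jlt <-] := cover f Sf xf.
  exists ((j + (n - s %% n)) %% n) => //.
  by rewrite modnDmr -modnDml addnCA (subnKC (ltnW (mod_lt s))) modnDr modn_small.
Qed.

Lemma link_cycle_type3_pattern ys fs : link_cycle 8 ys fs ->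
  link_word 8 fs = type3_pattern -> type3 fv S x.
Proof.
move=> [ys_inj fs_inj edges cover] w_pat.
have lab k : k < 8 -> corner_lab fv (fs k) x = nth Lt type3_pattern k.
  by move=> k8; rewrite -w_pat nth_mkseq.
have le k : k < 8 -> linkedge fv x (fs k) (ys k) (ys (k.+1 %% 8)) by move=> /edges [].
have uniq_map (T : eqType) (g : nat -> T) s :
    (forall i j, i < 8 -> j < 8 -> g i = g j -> i = j) -> all (gtn 8) s -> uniq s ->
    uniq (map g s).
  by move=> g_inj /allP s8 us; rewrite map_inj_in_uniq // => i j /s8 i8 /s8 j8; apply: g_inj.
(* Cyclically, a type 3 cycle reads v0 v1 v2 v3 v3' w2 w1 v0', with corners
   a1 b1 c1 r2 c2 b2 a2 r1 labelled as in [type3_pattern]. *)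
exists (fs 7), (fs 3), (fs 0), (fs 1), (fs 2), (fs 6), (fs 5), (fs 4),
       (ys 0), (ys 1), (ys 2), (ys 3), (ys 7), (ys 6), (ys 5), (ys 4); split.
- exact: (uniq_map _ fs [:: 7; 3; 0; 1; 2; 6; 5; 4]).
- exact: (uniq_map _ ys [:: 0; 1; 2; 3; 4; 5; 6; 7]).
- exact: (conj (linkedge_sym (le 7 isT)) (conj (le 3 isT) (conj (le 0 isT) (conj (le 1 isT)
    (conj (le 2 isT) (conj (linkedge_sym (le 6 isT)) (conj (linkedge_sym (le 5 isT))
    (linkedge_sym (le 4 isT))))))))).
- by rewrite !lab.
- move=> f; have perm8 : perm_eq (iota 0 8) [:: 7; 3; 0; 1; 2; 6; 5; 4] by [].
  rewrite -(perm_mem (perm_map fs perm8)); split=> [[Sf xf]|/mapP[k]].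
  + by have [k k8 <-] := cover f Sf xf; apply: map_f; rewrite mem_iota.
  + rewrite mem_iota => /andP[_ k8] ->; have [Sk [xk _]] := edges k k8.
    by split.
Qed.

Lemma link_cycle_type3 ys fs : link_cycle 8 ys fs ->
  type3_word (link_word 8 fs) -> type3 fv S x.
Proof.
move=> cyc /hasP[s _]; rewrite size_mkseq => /eqP w_pat.
apply: (link_cycle_type3_pattern (link_cycle_rot s _ cyc)) => //.
by rewrite -w_pat; apply: eq_mkseq => k; rewrite cnth_link_word.
Qed.

Lemma link_cycle_face_succ n ys fs p m : link_cycle n ys fs -> p < n -> m < n ->
  fs m <> fs p -> edge_in fv (fs m) x (ys (p.+1 %% n)) -> m = p.+1 %% n.
Proof.
move=> [ys_inj _ edges _] pn mn mp; have mod_lt k := ltn_pmod k (leq_ltn_trans (leq0n p) pn).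
case/(linkedge_edge_in _ (edges m mn).2) => [/esym|] /ys_inj.
- by move=> /(_ mn (mod_lt _)).
- rewrite -(add1n p) -(add1n m) => /(_ (mod_lt _) (mod_lt _)) /modnDl_inj.
  by move=> /(_ pn mn) e; case: mp; rewrite e.
Qed.

Lemma link_cycle_face_pred n ys fs p m : link_cycle n ys fs -> p < n -> m < n ->
  fs m <> fs p -> edge_in fv (fs m) x (ys p) -> p = m.+1 %% n.
Proof.
move=> [ys_inj _ edges _] pn mn mp; have n0 := leq_ltn_trans (leq0n p) pn.
case/(linkedge_edge_in _ (edges m mn).2) => /ys_inj.
- by move=> /(_ pn mn) e; case: mp; rewrite e.
- by move=> /(_ pn (ltn_pmod _ n0)).
Qed.

Lemma link_cycle_triangle_corners ys fs j :
  link_cycle 8 ys fs -> ladder_word_ok (link_word 8 fs) ->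
  j < 8 -> is_tri fv (fs (j.+1 %% 8)) ->
  ~ (corner_lab fv (fs j) x = LL /\ corner_lab fv (fs (j.+2 %% 8)) x = LL) /\
  (corner_lab fv (fs j) x = LL \/ corner_lab fv (fs (j.+2 %% 8)) x = LL -> type3 fv S x).
Proof.
move=> cyc ok j8 /(corner_lab_Lt _ _ x) tri.
have [] := ladder_word_ok_corner (j := j) ok.
- by rewrite size_mkseq.
- by rewrite cnth_link_word.
rewrite !cnth_link_word // (modn_small j8) => nLL t3.
by split=> // /t3; apply: link_cycle_type3 cyc.
Qed.

Lemma link_cycle_triangle ys fs T g g' :
  link_cycle 8 ys fs -> ladder_word_ok (link_word 8 fs) ->
  S T -> is_tri fv T -> x \in fv T -> S g -> S g' -> g <> T -> g' <> T ->
  edge_in fv g x (cnext (fv T) x) -> edge_in fv g' x (cprev (fv T) x) ->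
  ~ (corner_lab fv g x = LL /\ corner_lab fv g' x = LL) /\
  (corner_lab fv g x = LL \/ corner_lab fv g' x = LL -> type3 fv S x).
Proof.
move=> cyc ok ST tT xT Sg Sg' gT g'T eg eg'; have [_ _ edges cover] := cyc.
have [p p8 eT] := cover T ST xT; have [m m8 em] := cover g Sg eg.1.
have [m' m'8 em'] := cover g' Sg' eg'.1; subst T g g'.
have corners j k : j < 8 -> p = j.+1 %% 8 -> k = p.+1 %% 8 ->
    ~ (corner_lab fv (fs j) x = LL /\ corner_lab fv (fs k) x = LL) /\
    (corner_lab fv (fs j) x = LL \/ corner_lab fv (fs k) x = LL -> type3 fv S x).
  move=> j8 pj ->; rewrite pj modnSml.
  by apply: (link_cycle_triangle_corners cyc ok j8); rewrite -pj.
case: (linkedge_pair (edges p p8).2 (linkedge_corner xT)) => [[ep en]|[ep en]].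
- rewrite -en in eg; rewrite -ep in eg'.
  have [nLL t3] := corners m' m m'8 (link_cycle_face_pred cyc p8 m'8 g'T eg')
                                    (link_cycle_face_succ cyc p8 m8 gT eg).
  by split=> [[? ?]|/or_comm/t3]; [apply: nLL|].
- rewrite -en in eg'; rewrite -ep in eg.
  exact: corners m m' m8 (link_cycle_face_pred cyc p8 m8 gT eg)
                         (link_cycle_face_succ cyc p8 m'8 g'T eg').
Qed.

Lemma link_cycle_other_face n ys fs T y : link_cycle n ys fs -> 1 < n ->
  S T -> x \in fv T -> y = cnext (fv T) x \/ y = cprev (fv T) x ->
  exists g, [/\ S g, g <> T & edge_in fv g x y].
Proof.
move=> [_ fs_inj edges cover] n1 ST xT y_nbr; have [p pn eT] := cover T ST xT; subst T.
have mod_lt k := ltn_pmod k (ltnW n1).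
have face_ne k : k < n -> k != p -> fs k <> fs p by move=> kn /eqP kp /(fs_inj _ _ kn pn).
have [->|->] : y = ys p \/ y = ys (p.+1 %% n).
  by case: (linkedge_pair (edges p pn).2 (linkedge_corner xT)) => [[-> ->]|[-> ->]]; tauto.
- set m := (p + n.-1) %% n; have mp : m.+1 %% n = p by rewrite modnS_pred // ltnW.
  exists (fs m); split; first exact: (edges m (mod_lt _)).1.
  + apply: face_ne; first exact: mod_lt.
    by apply: contraTneq (modnS_neq n1 pn) => mp'; rewrite -{1}mp' mp eqxx.
  + by apply/(linkedge_edge_in _ (edges m (mod_lt _)).2); right; rewrite mp.
- exists (fs (p.+1 %% n)); split; first exact: (edges _ (mod_lt _)).1.
  + by apply: face_ne; rewrite ?modnS_neq.
  + by apply/(linkedge_edge_in _ (edges _ (mod_lt _)).2); left.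
Qed.

Lemma link_cycle_triangle_exists ys fs :
  link_cycle 8 ys fs -> ladder_word_ok (link_word 8 fs) ->
  exists T, [/\ S T, is_tri fv T & x \in fv T].
Proof.
case=> _ _ edges _ /andP[/mapP[i + /esym/(corner_lab_Lt _ _ x) tri] _].
rewrite mem_iota => /andP[_ i8]; have [Si [xi _]] := edges i i8.
by exists (fs i).
Qed.

End LinkCycle.

Section BradySurface.
Variables (V F : eqType) (adj : V -> V -> Prop) (fv : F -> seq V) (act : endo -> V -> V).
Hypothesis X : brady_complex adj fv act.
Variable S : F -> Prop.
Hypothesis HS : hamiltonian_surface adj fv S.

Lemma fv_uniq f : uniq (fv f).
Proof. by case/andP: (bc_face_shape X f). Qed.

Lemma adj_corner x f : x \in fv f -> adj x (cprev (fv f) x) /\ adj x (cnext (fv f) x).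
Proof.
move=> xf; split; last exact: (bc_face_edges X xf).
apply: (bc_adj_sym X); rewrite -{2}(cnext_cprev (fv_uniq f) xf).
exact: (bc_face_edges X (cprev_in xf)).
Qed.

Lemma edge_in_adj f a b : edge_in fv f a b -> adj a b.
Proof. by case=> af [<-|<-]; have [] := adj_corner af. Qed.

Lemma linkedge_adj x f a b : linkedge fv x f a b -> adj x a /\ adj x b.
Proof. by case=> xf; have [? ?] := adj_corner xf; case=> [[<- <-]|[<- <-]]. Qed.

Lemma lozenge_on_triangle_edge T g a b : is_tri fv T -> edge_in fv T a b ->
  edge_in fv g a b -> g <> T -> is_loz fv g.
Proof.
move=> tT eT eg gT; have [t [_ _ t_uniq]] := bc_one_tri X (edge_in_adj eT).
case/andP: (bc_face_shape X g) => /orP[tg|//] _.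
by case: gT; rewrite (t_uniq g tg eg) (t_uniq T tT eT).
Qed.

Lemma link_cycle_covers_nbrs x n ys fs : link_cycle fv S x n ys fs ->
  forall y, adj x y -> exists2 i, i < n & ys i = y.
Proof.
case=> _ _ edges cover y xy; case: HS => _ _ HS_edges _.
have [f Sf ef] := HS_edges x y xy; have [i i_n eif] := cover f Sf ef.1.
have [_ /linkedge_edge_in le] := edges i i_n; rewrite eif in le.
case: ((le y).1 ef) => ->; first by exists i.
by exists (i.+1 %% n); rewrite // ltn_pmod // (leq_ltn_trans (leq0n i) i_n).
Qed.

Section LadderLink.
Variables (x : V) (phi : nat -> V) (psi : nat -> F).
Hypothesis phi_inj : forall i j, i < 8 -> j < 8 -> phi i = phi j -> i = j.
Hypothesis phi_nbr : forall y, adj x y <-> exists2 i, i < 8 & phi i = y.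
Hypothesis psi_corner : forall f, x \in fv f -> exists2 k, k < 12 & psi k = f.
Hypothesis psi_edge : forall k, k < 12 ->
  let: (a, b, lb) := nth (0, 0, Lt) ladder_edges k in
  linkedge fv x (psi k) (phi a) (phi b) /\ corner_lab fv (psi k) x = lb.

Lemma link_cycle_in_ladder n ys fs i : link_cycle fv S x n ys fs -> i < n ->
  exists2 j, j < 8 & phi j = ys i.
Proof. by case=> _ _ edges _ /edges [_ /linkedge_adj [/phi_nbr]]. Qed.

Lemma link_cycle_size n ys fs : link_cycle fv S x n ys fs -> n = 8.
Proof.
move=> cyc; have [ys_inj _ _ _] := cyc.
have ys_uniq : uniq (mkseq ys n) by apply/mkseq_uniqP => i j; apply: ys_inj.
have phi_uniq : uniq (mkseq phi 8) by apply/mkseq_uniqP => i j; apply: phi_inj.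
suff /(uniq_perm ys_uniq phi_uniq)/perm_size : mkseq ys n =i mkseq phi 8.
  by rewrite !size_mkseq.
move=> y; apply/mapP/mapP => [[i] | [j]]; rewrite mem_iota => /andP[_ lt] ->.
- by have [j j8 <-] := link_cycle_in_ladder cyc lt; exists j; rewrite ?mem_iota.
- have [i i_n <-] := link_cycle_covers_nbrs cyc ((phi_nbr _).2 (ex_intro2 _ _ j lt erefl)).
  by exists i; rewrite ?mem_iota.
Qed.

Lemma ladder_label_corner f a b : x \in fv f -> a < 8 -> b < 8 ->
  linkedge fv x f (phi a) (phi b) -> ladder_label a b = Some (corner_lab fv f x).
Proof.
move=> xf a8 b8 lf; have [k k12 ek] := psi_corner xf; subst f.
have : nth (0, 0, Lt) ladder_edges k \in ladder_edges by rewrite mem_nth.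
move: (psi_edge k12); case: (nth _ _ k) => [[a' b'] lb] [lf' ->].
case/ladder_edge_label=> a'8 b'8 lab lab'.
case: (linkedge_pair lf lf') => [[ea eb]|[ea eb]].
- by rewrite (phi_inj a8 a'8 ea) (phi_inj b8 b'8 eb).
- by rewrite (phi_inj a8 b'8 ea) (phi_inj b8 a'8 eb).
Qed.

Lemma link_word_hamiltonian ys fs : link_cycle fv S x 8 ys fs ->
  exists2 l, perm_eq l (iota 0 8) & cycle_labels l = map Some (link_word fv x 8 fs).
Proof.
move=> cyc; have [ys_inj _ edges _] := cyc.
pose alp i := index (ys i) (mkseq phi 8).
have phi_uniq : uniq (mkseq phi 8) by apply/mkseq_uniqP => i j; apply: phi_inj.
have alpP i : i < 8 -> alp i < 8 /\ phi (alp i) = ys i.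
  move=> i8; rewrite /alp; have [j j8 <-] := link_cycle_in_ladder cyc i8.
  by rewrite -{1 2}(nth_mkseq (phi 0) phi j8) index_uniq ?size_mkseq.
have l_uniq : uniq (mkseq alp 8).
  apply/mkseq_uniqP => i j i8 j8 /(congr1 phi).
  by rewrite (alpP i i8).2 (alpP j j8).2; apply: ys_inj.
have l_sub : {subset mkseq alp 8 <= iota 0 8}.
  by move=> a /mapP[i]; rewrite !mem_iota => /andP[_ /alpP[]] + _ ->.
exists (mkseq alp 8).
  apply: uniq_perm l_uniq (iota_uniq 0 8) (uniq_min_size l_uniq l_sub _).2.
  by rewrite !size_mkseq.
rewrite /cycle_labels /link_word size_mkseq.
apply: (eq_from_nth (x0 := None)); rewrite ?size_map ?size_mkseq // => i i8.
have i1_8 : i.+1 %% 8 < 8 by rewrite ltn_mod.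
have [[a8 ea] [b8 eb]] := (alpP i i8, alpP _ i1_8); have [_ [xfi lfi]] := edges i i8.
rewrite (nth_map Lt) ?size_mkseq // !nth_mkseq //.
by apply: ladder_label_corner a8 b8 _; rewrite ?ea ?eb.
Qed.

End LadderLink.

Lemma surface_link_cycle x : exists ys fs,
  link_cycle fv S x 8 ys fs /\ ladder_word_ok (link_word fv x 8 fs).
Proof.
have [phi [psi [phi_inj [phi_nbr [_ [psi_corner psi_edge]]]]]] := bc_links X x.
case: HS => _ _ _ /(_ x) [n [_ [ys [fs cyc]]]].
have n8 := link_cycle_size phi_inj phi_nbr cyc; subst n.
exists ys, fs; split=> //.
have [l pl El] := link_word_hamiltonian phi_inj phi_nbr (fun f => (psi_corner f).1) psi_edge cyc.
exact: hamiltonian_ladder_word_ok pl El.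
Qed.

Lemma surface_triangle_at x : exists T, [/\ S T, is_tri fv T & x \in fv T].
Proof.
by have [ys [fs [cyc ok]]] := surface_link_cycle x; exact: link_cycle_triangle_exists cyc ok.
Qed.

Lemma surface_other_face x T y : S T -> x \in fv T ->
  y = cnext (fv T) x \/ y = cprev (fv T) x -> exists g, [/\ S g, g <> T & edge_in fv g x y].
Proof. by have [ys [fs [cyc _]]] := surface_link_cycle x; apply: (link_cycle_other_face cyc). Qed.

Lemma surface_triangle_corners x T g g' :
  S T -> is_tri fv T -> x \in fv T -> S g -> S g' -> g <> T -> g' <> T ->
  edge_in fv g x (cnext (fv T) x) -> edge_in fv g' x (cprev (fv T) x) ->
  ~ (corner_lab fv g x = LL /\ corner_lab fv g' x = LL) /\
  (corner_lab fv g x = LL \/ corner_lab fv g' x = LL -> type3 fv S x).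
Proof. by have [ys [fs [cyc ok]]] := surface_link_cycle x; apply: (link_cycle_triangle cyc ok). Qed.

Lemma triangle_obtuse_corner x T g g' :
  S T -> is_tri fv T -> x \in fv T -> S g -> S g' -> g <> T -> g' <> T ->
  edge_in fv g x (cnext (fv T) x) -> edge_in fv g' x (cprev (fv T) x) ->
  corner_lab fv g x = LL \/ corner_lab fv g' x = LL.
Proof.
move=> ST tT xT Sg Sg' gT g'T eg eg'.
have uT := fv_uniq T; have T3 : size (fv T) = 3 by apply/eqP.
have qT := cnext_in xT; have rT := cprev_in xT.
have qr := cnext_cnext3 uT xT T3; have rq := cprev_cprev3 uT xT T3.
have qx := cprev_cnext uT xT; have rx := cnext_cprev uT xT.
set q := cnext (fv T) x in qT qr rq qx eg *; set r := cprev (fv T) x in rT qr rq rx eg' *.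
have [h [Sh hT eh]] := surface_other_face ST qT (or_introl (esym qr)).
have := surface_triangle_corners ST tT qT Sh Sg hT gT; rewrite qr qx.
move=> /(_ eh (edge_in_sym fv_uniq eg)) [not_hq_gq _].
have := surface_triangle_corners ST tT rT Sg' Sh g'T hT; rewrite rx rq.
move=> /(_ (edge_in_sym fv_uniq eg') (edge_in_sym fv_uniq eh)) [not_g'r_hr _].
have lz_g : is_loz fv g by apply: lozenge_on_triangle_edge tT _ eg gT; split=> //; left.
have lz_g' : is_loz fv g' by apply: lozenge_on_triangle_edge tT _ eg' g'T; split=> //; right.
have lz_h : is_loz fv h by apply: lozenge_on_triangle_edge tT _ eh hT; split=> //; left.
case: (corner_lab fv g x =P LL) => [|gx]; [by left | right].
apply/(lozenge_corner_LL fv_uniq lz_g' (edge_in_sym fv_uniq eg')) => g'r.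
apply: not_g'r_hr; split=> //; apply/(lozenge_corner_LL fv_uniq lz_h eh) => hq.
by apply: not_hq_gq; split=> //; apply/(lozenge_corner_LL fv_uniq lz_g eg).
Qed.

End BradySurface.

Theorem mainTheorem5 (V F : eqType) (adj : V -> V -> Prop) (fv : F -> seq V)
    (act : endo -> V -> V) (X : brady_complex adj fv act)
    (S : F -> Prop) (HS : hamiltonian_surface adj fv S) :
  forall x : V, type3 fv S x.
Proof.
move=> x; have [T [ST tT xT]] := surface_triangle_at X HS x.
have [g [Sg gT eg]] := surface_other_face X HS ST xT (or_introl erefl).
have [g' [Sg' g'T eg']] := surface_other_face X HS ST xT (or_intror erefl).
exact: (surface_triangle_corners X HS ST tT xT Sg Sg' gT g'T eg eg').2
         (triangle_obtuse_corner X HS ST tT xT Sg Sg' gT g'T eg eg').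
Qed.
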